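(* Let $H$ be a finite group, let $N$ be a subgroup of the center $Z(H)$, let $g \colon H \to H' = H/N$ be the canonical projection, and let $\psi \colon H \to \Gamma'$ be a homomorphism to an abelian group $\Gamma'$. Suppose $\ker g \cap \ker \psi = \{e\}$. Let $\mathcal{A}$ be an abelian subgroup of $H$ of the smallest possible index among abelian subgroups of $H$, and $\mathcal{A}'$ an abelian subgroup of $H'$ of the smallest possible index among abelian subgroups of $H'$. Then $[H : \mathcal{A}] = [H' : \mathcal{A}']$.
   Context: $e$ denotes the neutral element, $Z(H)$ the center of $H$, and $[A:B]$ the index of a subgroup $B$ in a group $A$. *)

From mathcomp Require Import all_boot all_fingroup all_solvable.
Set Implicit Arguments. Unset Strict Implicit. Unset Printing Implicit Defensive.
Local Open Scope group_scope.

Definition min_index_abelian (gT : finGroupType) (G A : {group gT}) : Prop :=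
  [/\ A \subset G, abelian A &
      forall B : {group gT}, B \subset G -> abelian B -> #|G : A| <= #|G : B|].

From mathcomp Require Import all_boot all_fingroup all_solvable.
Set Implicit Arguments. Unset Strict Implicit. Unset Printing Implicit Defensive.
Local Open Scope group_scope.

(* Passing to H / N never increases the index of an abelian subgroup, since
   the image of an abelian subgroup is abelian.  Conversely, the hypothesis
   on kernels embeds H into (H / N) x Gamma'; so if the full preimage L of an
   abelian subgroup of H / N had a nontrivial commutator subgroup, that
   subgroup would lie both in N and in ker psi.  Hence every abelian subgroup
   of H / N lifts to an abelian subgroup of H of the same index.  Centrality
   of N is only used to know that N is normal in H. *)

Lemma der1_sub_ker (aT rT : finGroupType) (D G : {group aT})
    (f : {morphism D >-> rT}) :
  G \subset D -> abelian (f @* G) -> G^`(1) \subset 'ker f.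
Proof.
move=> sGD abfG; rewrite ker_trivg_morphim (subset_trans (der1_subG G)) //=.
by rewrite morphim_der // (derG1P abfG).
Qed.

Lemma index_quotient_le (gT : finGroupType) (G N A : {group gT}) :
  G \subset 'N(N) -> #|G / N : A / N| <= #|G : A|.
Proof.
move=> nNG; rewrite dvdn_leq ?indexg_gt0 // index_quotient //.
exact: subset_trans (subsetIl _ _) nNG.
Qed.

Section LiftAbelian.

Variables (gT rT : finGroupType) (H N : {group gT}) (psi : {morphism H >-> rT}).
Hypotheses (nNH : N <| H) (abpsiH : abelian (psi @* H)).
Hypothesis tiker : 'ker_H (coset N) :&: 'ker psi = 1.

Lemma abelian_of_quotient_abelian (L : {group gT}) :
  L \subset H -> abelian (L / N) -> abelian L.
Proof.
move=> sLH abLN; have nNL := subset_trans sLH (normal_norm nNH).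
have sL'N : L^`(1) \subset N := der1_min nNL abLN.
have sL'psi : L^`(1) \subset 'ker psi.
  by apply: der1_sub_ker sLH (abelianS (morphimS psi sLH) abpsiH).
apply/derG1P/trivgP; rewrite -tiker subsetI sL'psi andbT ker_coset subsetI sL'N.
by rewrite (subset_trans sL'N) ?normal_sub.
Qed.

Lemma abelian_lift_index (B : {group coset_of N}) :
  B \subset H / N -> abelian B ->
  exists2 L : {group gT}, L \subset H /\ abelian L & #|H : L| = #|H / N : B|.
Proof.
move=> sBHN abB; case: (inv_quotientS nNH sBHN) => L defB sNL sLH.
have abL : abelian L by apply: abelian_of_quotient_abelian sLH _; rewrite -defB.
exists L => //; rewrite defB index_quotient_eq ?normal_norm //.
exact: subset_trans (subsetIr _ _) sNL.
Qed.

End LiftAbelian.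

Theorem mainTheorem4 (gT rT : finGroupType) (H N : {group gT})
    (psi : {morphism H >-> rT})
    (hN : N \subset 'Z(H))
    (hGamma : abelian [set: rT])
    (hker : 'ker_H (coset N) :&: 'ker psi = 1)
    (A : {group gT}) (A' : {group coset_of N})
    (hA : min_index_abelian H A)
    (hA' : min_index_abelian (H / N)%G A') :
  #|H : A| = #|(H / N) : A'|.
Proof.
have nNH : N <| H := sub_center_normal hN.
have abpsiH : abelian (psi @* H) := abelianS (subsetT _) hGamma.
case: hA => sAH abA minA; case: hA' => sA'HN abA' minA'.
apply/eqP; rewrite eqn_leq; apply/andP; split.
- have [L [sLH abL] <-] := abelian_lift_index nNH abpsiH hker sA'HN abA'.
  exact: minA.
- apply: leq_trans (minA' _ (quotientS N sAH) (quotient_abelian N abA)) _.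
  exact: index_quotient_le (normal_norm nNH).
Qed.
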